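(* Suppose $P(z)$ is invertible at some $z \in \mathbb{C}$ and consider $X, Y, W \in \mathbb{C}^{nd}$ block partitioned as $X=[X_0;\ldots;X_{d-1}]$ etc. with blocks in $\mathbb{C}^n$. Then: (1) The block components of $X = (z\mathcal{B} - \mathcal{A})^{-1} Y$ are given by $X_0 = P(z)^{-1}\left(- Y_{d-1} - A_d Y_{d-1} + \sum_{i=1}^d A_i \sum_{j=0}^{i-1} z^{i-1-j} Y_j\right)$, and $X_i = z X_{i-1} - Y_{i-1}$ for $i=1, 2, \ldots, d-1$. (2) The block components of $\tilde{X} = (z\mathcal{B} - \mathcal{A})^{-*} W$ are given by $\tilde{X}_{d-1} = -P(z)^{-*} \sum_{j=0}^{d-1} \bar{z}^j W_j$, $\tilde{X}_{d-2} = -W_{d-1} - \bar z A_d^* \tilde{X}_{d-1} - A_{d-1}^*\tilde{X}_{d-1}$, and $\tilde{X}_{i} = -W_{i+1} + \bar z \tilde{X}_{i+1} - A_{i+1}^* \tilde{X}_{d-1}$ for $i=0, 1, \ldots, d-3$.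
   Context: Let $A_0, \ldots, A_d \in \mathbb{C}^{n\times n}$ with $A_d\neq 0$, and $P(z) = \sum_{j=0}^d z^j A_j$. The first companion linearization is the pencil $\mathcal{A} - z\mathcal{B}\in\mathbb{C}^{nd\times nd}$, written in $d\times d$ blocks of size $n\times n$: $\mathcal{A}$ has identity blocks $I$ on the first block superdiagonal in its first $d-1$ block rows, zeros elsewhere in those rows, and last block row $[A_0, A_1, \ldots, A_{d-1}]$; $\mathcal{B} = \mathrm{diag}(I, \ldots, I, -A_d)$. $M^{-*}$ denotes $(M^* )^{-1}$ and $^*$ is conjugate transpose. *)

From HB Require Import structures.
From mathcomp Require Import all_boot all_order all_algebra.
Unset Printing Implicit Defensive.
Import Order.TTheory GRing.Theory Num.Theory.
Local Open Scope ring_scope.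

(* Complex scalars: any numClosedFieldType C (e.g. the complex numbers),
   with Num.conj the complex conjugation. *)

Definition ctmx (C : numClosedFieldType) (m p : nat) (M : 'M[C]_(m, p)) : 'M[C]_(p, m) :=
  (map_mx Num.conj M)^T.
Arguments ctmx {C m p} M.

Definition Peval (C : numClosedFieldType) (n d : nat) (A : nat -> 'M[C]_n) (z : C) : 'M[C]_n :=
  \sum_(j < d.+1) z ^+ j *: A j.
Arguments Peval {C n} d A z.

(* entry (i, j) of a square matrix, by nat indices (0 if out of range) *)
Definition ment (C : numClosedFieldType) (n : nat) (M : 'M[C]_n) (i j : nat) : C :=
  match insub i, insub j with Some a, Some b => M a b | _, _ => 0 end.
Arguments ment {C n} M i j.

(* Global index r of C^{nd} corresponds to block r %/ n, in-block entry r %% n. *)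

(* First companion matrix \mathcal{A}: identity blocks on the first block
   superdiagonal in block rows 0..d-2, last block row [A_0, ..., A_{d-1}]. *)
Definition compLinA (C : numClosedFieldType) (n d : nat) (A : nat -> 'M[C]_n) : 'M[C]_(d * n) :=
  \matrix_(r, c)
    let ri := (r %/ n)%N in let rk := (r %% n)%N in
    let ci := (c %/ n)%N in let ck := (c %% n)%N in
    if (ri < d.-1)%N then (if (ci == ri.+1) && (rk == ck) then 1 else 0)
    else ment (A ci) rk ck.
Arguments compLinA {C} n d A.

(* \mathcal{B} = diag(I, ..., I, -A_d) *)
Definition compLinB (C : numClosedFieldType) (n d : nat) (A : nat -> 'M[C]_n) : 'M[C]_(d * n) :=
  \matrix_(r, c)
    let ri := (r %/ n)%N in let rk := (r %% n)%N in
    let ci := (c %/ n)%N in let ck := (c %% n)%N in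
    if ri == ci then
      (if (ri < d.-1)%N then (if rk == ck then 1 else 0) else - ment (A d) rk ck)
    else 0.
Arguments compLinB {C} n d A.

(* i-th block (of size n) of a column vector: entries i*n .. i*n+n-1
   (zero outside the range, never used there). *)
Definition blk (C : numClosedFieldType) (n : nat) (m : nat) (X : 'cV[C]_m) (i : nat) : 'cV[C]_n :=
  \col_(k < n) oapp (fun r : 'I_m => X r 0) 0 (insub (i * n + k)%N).
Arguments blk {C} n {m} X i.

(* The first d-1 block rows of L = zB - A read (L X)_i = z X_i - X_{i+1}, so L X = Y is the
   recurrence X_{i+1} = z X_i - Y_i, solved by X_i = z^i X_0 - \sum_{j<i} z^{i-1-j} Y_j;
   substituting into the last block row yields P(z) X_0 (and, for Y = 0, that L is
   invertible whenever P(z) is).  For the adjoint, L maps the block column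
   [I; zI; ...; z^{d-1} I] to [0; ...; 0; -P(z)], so pairing L^* X = W with that column
   gives P(z)^* X_{d-1} = -\sum_j conj(z)^j W_j; the other block rows of L^* X = W are then
   solved backwards for X_{d-2}, ..., X_0. *)

From HB Require Import structures.
From mathcomp Require Import all_boot all_order all_algebra.
From mathcomp Require Import zify.
Import Order.TTheory GRing.Theory Num.Theory.
Set Implicit Arguments.
Unset Strict Implicit.
Local Open Scope ring_scope.

Section ConjugateTranspose.
Variable C : numClosedFieldType.

Lemma ctmxE m p (M : 'M[C]_(m, p)) k l : ctmx M k l = Num.conj (M l k).
Proof. by rewrite !mxE. Qed.

Lemma ctmxB m p (M N : 'M[C]_(m, p)) : ctmx (M - N) = ctmx M - ctmx N.
Proof. by rewrite /ctmx map_mxB linearB. Qed.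

Lemma ctmxN m p (M : 'M[C]_(m, p)) : ctmx (- M) = - ctmx M.
Proof. by rewrite /ctmx map_mxN linearN. Qed.

Lemma ctmxZ m p (a : C) (M : 'M[C]_(m, p)) : ctmx (a *: M) = Num.conj a *: ctmx M.
Proof. by rewrite /ctmx map_mxZ linearZ. Qed.

Lemma ctmx_sum m p q (F : 'I_q -> 'M[C]_(m, p)) :
  ctmx (\sum_(i < q) F i) = \sum_(i < q) ctmx (F i).
Proof. by rewrite /ctmx map_mx_sum linear_sum. Qed.

Lemma ctmx_scalar m (a : C) : ctmx (a%:M : 'M[C]_m) = (Num.conj a)%:M.
Proof. by rewrite /ctmx map_scalar_mx tr_scalar_mx. Qed.

Lemma ctmx_unit m (M : 'M[C]_m) : M \in unitmx -> ctmx M \in unitmx.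
Proof. by rewrite /ctmx unitmx_tr map_unitmx. Qed.

End ConjugateTranspose.

Section BlockIndex.
Variables d n : nat.

Lemma blk_index_subproof (i : 'I_d) (k : 'I_n) : (i * n + k < d * n)%N.
Proof. have := ltn_ord i; have := ltn_ord k; nia. Qed.

Definition blk_index (i : 'I_d) (k : 'I_n) : 'I_(d * n) := Ordinal (blk_index_subproof i k).

Lemma blk_index_divn i k : (blk_index i k %/ n)%N = i.
Proof. by rewrite /= divnMDl ?divn_small ?addn0 // (leq_ltn_trans _ (ltn_ord k)). Qed.

Lemma blk_index_modn i k : (blk_index i k %% n)%N = k.
Proof. by rewrite /= modnMDl modn_small. Qed.

Lemma blk_size_gt0 (c : 'I_(d * n)) : (0 < n)%N.
Proof. by case: c => c lt_c; rewrite lt0n; apply: contraTneq lt_c => ->; rewrite muln0. Qed.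

Lemma blk_divn_lt (c : 'I_(d * n)) : (c %/ n < d)%N.
Proof. by rewrite ltn_divLR ?ltn_ord ?(blk_size_gt0 c). Qed.

Lemma blk_modn_lt (c : 'I_(d * n)) : (c %% n < n)%N.
Proof. by rewrite ltn_pmod ?(blk_size_gt0 c). Qed.

Definition blk_coord (c : 'I_(d * n)) : 'I_d * 'I_n :=
  (Ordinal (blk_divn_lt c), Ordinal (blk_modn_lt c)).

Lemma blk_coordK : cancel blk_coord (uncurry blk_index).
Proof. by move=> c; apply: val_inj; rewrite /= -divn_eq. Qed.

Lemma blk_indexK : cancel (uncurry blk_index) blk_coord.
Proof.
by move=> [i k]; congr (_, _); apply: val_inj; rewrite /= ?blk_index_divn ?blk_index_modn.
Qed.

Lemma big_blk_index (V : nmodType) (F : 'I_(d * n) -> V) :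
  \sum_(c < d * n) F c = \sum_(i < d) \sum_(k < n) F (blk_index i k).
Proof.
rewrite pair_bigA (reindex (uncurry blk_index)) /=; first by apply: eq_bigr => -[].
by exists blk_coord => c _; [exact: blk_indexK | exact: blk_coordK].
Qed.

End BlockIndex.

Section Blocks.
Variables (C : numClosedFieldType) (d n : nat).

Lemma blk0 m i : blk n (0 : 'cV[C]_m) i = 0.
Proof. by apply/colP => k; rewrite !mxE; case: insub => //= r; rewrite mxE. Qed.

Lemma blkE (X : 'cV[C]_(d * n)) (i : 'I_d) k : blk n X i k 0 = X (blk_index i k) 0.
Proof. by rewrite mxE (_ : (i * n + k)%N = blk_index i k) // valK. Qed.

Lemma blk_eq0 (X : 'cV[C]_(d * n)) : (forall i : 'I_d, blk n X i = 0) -> X = 0.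
Proof.
move=> X_blk0; apply/colP => c; rewrite -(blk_coordK c) mxE.
by case: (blk_coord c) => i k /=; rewrite -blkE X_blk0 mxE.
Qed.

Definition mxblk (M : 'M[C]_(d * n)) (i j : 'I_d) : 'M[C]_n :=
  \matrix_(k, l) M (blk_index i k) (blk_index j l).

Lemma blk_mul (M : 'M[C]_(d * n)) (X : 'cV[C]_(d * n)) (i : 'I_d) :
  blk n (M *m X) i = \sum_j mxblk M i j *m blk n X j.
Proof.
apply/colP => k; rewrite blkE mxE big_blk_index summxE; apply: eq_bigr => j _.
by rewrite mxE; apply: eq_bigr => l _; rewrite mxE blkE.
Qed.

Lemma mxblk_ctmx (M : 'M[C]_(d * n)) i j : mxblk (ctmx M) i j = ctmx (mxblk M j i).
Proof. by apply/matrixP => k l; rewrite !(mxE, ctmxE). Qed.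

Lemma blk_ctmx_mul (M : 'M[C]_(d * n)) (X : 'cV[C]_(d * n)) (i : 'I_d) :
  blk n (ctmx M *m X) i = \sum_j ctmx (mxblk M j i) *m blk n X j.
Proof. by rewrite blk_mul; apply: eq_bigr => j _; rewrite mxblk_ctmx. Qed.

End Blocks.

Section KroneckerSums.
Variables (R : pzRingType) (V : lmodType R).

Lemma sum_delta m i (G : nat -> V) :
  \sum_(j < m) (j == i :> nat)%:R *: G j = if (i < m)%N then G i else 0.
Proof.
rewrite -(big_ord1_eq +%R G) [RHS]big_mkcond; apply: eq_bigr => j _.
by case: eqP; rewrite ?scale1r ?scale0r.
Qed.

Lemma sum_delta_succ m i (G : nat -> V) :
  \sum_(j < m) (i == j.+1 :> nat)%:R *: G j =
    if i is i'.+1 then (if (i' < m)%N then G i' else 0) else 0.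
Proof.
case: i => [|i]; first by rewrite big1 // => j _; rewrite scale0r.
by rewrite -sum_delta; apply: eq_bigr => j _; rewrite eqSS eq_sym.
Qed.

End KroneckerSums.

Section HornerRecurrence.
Variables (R : pzRingType) (V : lmodType R) (z : R).

Definition horner_sum (y : nat -> V) (i : nat) : V :=
  \sum_(0 <= j < i) z ^+ (i.-1 - j) *: y j.

Lemma horner_sum0 y : horner_sum y 0 = 0.
Proof. by rewrite /horner_sum big_geq. Qed.

Lemma horner_sumS y i : horner_sum y i.+1 = z *: horner_sum y i + y i.
Proof.
rewrite /horner_sum big_nat_recr //= subnn expr0 scale1r scaler_sumr; congr (_ + _).
by apply: eq_big_nat => j /andP[_ lt_ji]; rewrite scalerA -exprS; congr (_ ^+ _ *: _); lia.
Qed.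

Lemma horner_recurrence m (x y : nat -> V) :
  (forall i, (i < m)%N -> x i.+1 = z *: x i - y i) ->
  forall i, (i <= m)%N -> x i = z ^+ i *: x 0 - horner_sum y i.
Proof.
move=> x_rec; elim=> [|i IH] lt_im; first by rewrite expr0 scale1r horner_sum0 subr0.
by rewrite x_rec // IH 1?ltnW // horner_sumS scalerBr scalerA -exprS opprD addrA.
Qed.

End HornerRecurrence.

Lemma mentE (C : numClosedFieldType) n (M : 'M[C]_n) (k l : 'I_n) : ment M k l = M k l.
Proof. by rewrite /ment !valK. Qed.

Lemma inj_unitmx (F : fieldType) m (M : 'M[F]_m) :
  (forall v : 'cV_m, M *m v = 0 -> v = 0) -> M \in unitmx.
Proof.
move=> M_inj; rewrite -unitmx_tr -row_free_unit; apply: inj_row_free => v vM0.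
apply: trmx_inj; rewrite trmx0; apply: M_inj.
by rewrite -[M]trmxK -trmx_mul vM0 trmx0.
Qed.

(* The pencil below has [d.+1] blocks, so [A d.+1] is the leading coefficient. *)
Section CompanionPencil.
Variables (C : numClosedFieldType) (n d : nat) (A : nat -> 'M[C]_n) (z : C).
Local Notation pencil := (z *: compLinB n d.+1 A - compLinA n d.+1 A).
Local Notation blk := (blk n).

Lemma mxblk_pencil_top (i j : 'I_d.+1) : (i < d)%N ->
  mxblk pencil i j = (j == i :> nat)%:R *: z%:M - (j == i.+1 :> nat)%:R *: 1%:M.
Proof.
move=> lt_id; apply/matrixP => k l.
rewrite !mxE !blk_index_divn !blk_index_modn /= lt_id (eq_sym (i : nat)) !val_eqE.
by case: (j == i); case: (j == i.+1 :> nat); case: (k == l);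
  rewrite /= ?(mulr0, mul0r, mulr1, mul1r, subr0, sub0r, oppr0).
Qed.

Lemma mxblk_pencil_last (j : 'I_d.+1) :
  mxblk pencil ord_max j = - ((j == d :> nat)%:R *: (z *: A d.+1)) - A j.
Proof.
apply/matrixP => k l; rewrite !mxE !blk_index_divn !blk_index_modn /= ltnn !mentE.
rewrite (eq_sym (ord_max : nat)).
by case: (j == d :> nat); rewrite /= ?(mulr0, mul0r, mulr1, mul1r, subr0, sub0r, oppr0, mulrN).
Qed.

Lemma pencil_row_top p (f : nat -> 'M[C]_(n, p)) (i : 'I_d.+1) : (i < d)%N ->
  \sum_j mxblk pencil i j *m f j = z *: f i - f i.+1.
Proof.
move=> lt_id; under eq_bigr => j _ do
  rewrite mxblk_pencil_top // mulmxBl -!scalemxAl !mul_scalar_mx scale1r.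
by rewrite sumrB (sum_delta _ _ (fun j => z *: f j)) sum_delta ltn_ord ltnS lt_id.
Qed.

Lemma pencil_row_last p (f : nat -> 'M[C]_(n, p)) :
  \sum_j mxblk pencil ord_max j *m f j = - (z *: (A d.+1 *m f d)) - \sum_(j < d.+1) A j *m f j.
Proof.
under eq_bigr => j _ do rewrite mxblk_pencil_last mulmxBl mulNmx -!scalemxAl.
by rewrite sumrB sumrN (sum_delta _ _ (fun j => z *: (A d.+1 *m f j))) ltnSn.
Qed.

Lemma pencil_row_powers (i : 'I_d.+1) :
  \sum_(j < d.+1) z ^+ j *: mxblk pencil i j = if (i < d)%N then 0 else - Peval d.+1 A z.
Proof.
under eq_bigr => j _ do rewrite -mul_mx_scalar.
case: ifP => [lt_id | ge_id].
  by rewrite (pencil_row_top (fun j => (z ^+ j)%:M)) // scale_scalar_mx -exprS subrr.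
have -> : i = ord_max by apply/val_inj/eqP; rewrite /= eqn_leq -ltnS ltn_ord leqNgt ge_id.
rewrite (pencil_row_last (fun j => (z ^+ j)%:M)) /Peval [in RHS]big_ord_recr /= opprD addrC.
by congr (- _ + - _); [apply: eq_bigr => j _ |]; rewrite mul_mx_scalar // scalerA -exprS.
Qed.

Lemma blk_pencil_mul_top (X : 'cV[C]_(d.+1 * n)) i : (i < d)%N ->
  blk (pencil *m X) i = z *: blk X i - blk X i.+1.
Proof. by move=> lt_id; rewrite (blk_mul _ _ (Ordinal (leqW lt_id))) pencil_row_top. Qed.

Lemma blk_pencil_mul_last (X : 'cV[C]_(d.+1 * n)) :
  blk (pencil *m X) d = - (z *: (A d.+1 *m blk X d)) - \sum_(j < d.+1) A j *m blk X j.
Proof. by rewrite (blk_mul _ _ ord_max) pencil_row_last. Qed.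

Lemma adj_pencil_mul_powers (X : 'cV[C]_(d.+1 * n)) :
  \sum_(j < d.+1) Num.conj z ^+ j *: blk (ctmx pencil *m X) j =
    - (ctmx (Peval d.+1 A z) *m blk X d).
Proof.
have conj_powers (i : 'I_d.+1) :
    \sum_(j < d.+1) Num.conj z ^+ j *: (ctmx (mxblk pencil i j) *m blk X i)
    = ctmx (\sum_(j < d.+1) z ^+ j *: mxblk pencil i j) *m blk X i.
  by rewrite ctmx_sum mulmx_suml; apply: eq_bigr => j _; rewrite ctmxZ rmorphXn scalemxAl.
under eq_bigr => j _ do rewrite blk_ctmx_mul scaler_sumr.
rewrite exchange_big big_ord_recr /= big1 => [|i _]; rewrite conj_powers pencil_row_powers /=.
  by rewrite ltnn ctmxN mulNmx add0r.
by rewrite ltn_ord /ctmx map_mx0 trmx0 mul0mx.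
Qed.

Lemma blk_adj_pencil_mulS (X : 'cV[C]_(d.+1 * n)) j : (j < d)%N ->
  blk (ctmx pencil *m X) j.+1 =
    (if (j.+1 < d)%N then Num.conj z *: blk X j.+1 else 0) - blk X j
    - (j.+1 == d)%:R *: (Num.conj z *: (ctmx (A d.+1) *m blk X d))
    - ctmx (A j.+1) *m blk X d.
Proof.
move=> lt_jd; rewrite (blk_ctmx_mul _ _ (Ordinal (lt_jd : j.+1 < d.+1)%N)) big_ord_recr /=.
under eq_bigr => i _ do
  rewrite (@mxblk_pencil_top (widen_ord (leqnSn d) i) _ (ltn_ord i)) ctmxB !ctmxZ !ctmx_scalar
    !rmorph_nat rmorph1 mulmxBl -!scalemxAl !mul_scalar_mx scale1r /= (eq_sym j.+1 i).
rewrite sumrB (sum_delta _ _ (fun i => Num.conj z *: blk X i)) sum_delta_succ lt_jd.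
by rewrite mxblk_pencil_last ctmxB ctmxN !ctmxZ rmorph_nat mulmxBl mulNmx -!scalemxAl /= !addrA.
Qed.

Lemma pencil_mul_solve (X Y : 'cV[C]_(d.+1 * n)) : pencil *m X = Y ->
  (forall i, (i < d)%N -> blk X i.+1 = z *: blk X i - blk Y i) /\
  Peval d.+1 A z *m blk X 0 =
    - blk Y d - A d.+1 *m blk Y d + \sum_(1 <= i < d.+2) A i *m horner_sum z (blk Y) i.
Proof.
move=> XY; have X_rec i : (i < d)%N -> blk X i.+1 = z *: blk X i - blk Y i.
  by move=> lt_id; rewrite -XY blk_pencil_mul_top // opprB addrCA subrr addr0.
split=> //.
(* The virtual block x_{d+1} := z x_d - Y_d extends the recurrence one step, which turns the
   last block row into \sum_{i <= d+1} A_i x_i = - Y_d - A_{d+1} Y_d. *)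
pose x i := if i == d.+1 then z *: blk X d - blk Y d else blk X i.
have x_rec i : (i < d.+1)%N -> x i.+1 = z *: x i - blk Y i.
  rewrite /x ltnS leq_eqVlt eqSS => /orP[/eqP -> | lt_id]; first by rewrite eqxx ltn_eqF.
  by rewrite !ltn_eqF ?X_rec // ltnS ltnW.
have Ax_sum : \sum_(i < d.+2) A i *m x i = - blk Y d - A d.+1 *m blk Y d.
  rewrite big_ord_recr /= {2}/x eqxx mulmxBr addrA; congr (_ - _).
  rewrite (eq_bigr (fun i : 'I_d.+1 => A i *m blk X i)) => [|i _]; last by rewrite /x ltn_eqF.
  by rewrite -XY blk_pencil_mul_last opprB opprK -scalemxAr.
have /eqP : \sum_(i < d.+2) A i *m x i =
    Peval d.+1 A z *m blk X 0 - \sum_(i < d.+2) A i *m horner_sum z (blk Y) i.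
  rewrite /Peval mulmx_suml -sumrB; apply: eq_bigr => i _.
  by rewrite (horner_recurrence x_rec (leq_ord i)) mulmxBr -scalemxAl -scalemxAr.
rewrite Ax_sum eq_sym subr_eq => /eqP ->; congr (_ + _).
by rewrite big_ord_recl horner_sum0 mulmx0 add0r big_add1 big_mkord.
Qed.

Lemma adj_pencil_mul_back_subst (X W : 'cV[C]_(d.+1 * n)) j :
  ctmx pencil *m X = W -> (j < d)%N ->
  blk X j = (if (j.+1 < d)%N then Num.conj z *: blk X j.+1 else 0) - blk W j.+1
    - (j.+1 == d)%:R *: (Num.conj z *: (ctmx (A d.+1) *m blk X d))
    - ctmx (A j.+1) *m blk X d.
Proof.
move=> <- lt_jd; rewrite blk_adj_pencil_mulS //.
by rewrite -!(addrA _ (- (_ *: _))) -!opprD opprB addrCA [_ + (_ + _)]addrC addrK subKr.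
Qed.

Lemma pencil_unitmx : Peval d.+1 A z \in unitmx -> pencil \in unitmx.
Proof.
move=> P_unit; apply: inj_unitmx => X /pencil_mul_solve[X_rec].
have horner_sum_blk0 i : horner_sum z (blk (0 : 'cV[C]_(d.+1 * n))) i = 0.
  by apply: big1 => j _; rewrite blk0 scaler0.
rewrite blk0 mulmx0 subr0 oppr0 add0r big1 => [|i _]; last by rewrite horner_sum_blk0 mulmx0.
move=> /(congr1 (mulmx (invmx (Peval d.+1 A z)))); rewrite mulKmx // mulmx0 => X0.
apply: blk_eq0 => -[i]; elim: i => [|i IH] lt_id //=.
by rewrite X_rec // (IH (ltnW lt_id)) blk0 scaler0 subr0.
Qed.

End CompanionPencil.

Unset Implicit Arguments.

Theorem theorem2p2 (C : numClosedFieldType) (n d : nat) (A : nat -> 'M[C]_n)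
  (hd : (0 < d)%N) (hAd : A d != 0) (z : C)
  (hP : Peval d A z \in unitmx) (Y W : 'cV[C]_(d * n)) :
  (let X := invmx (z *: compLinB n d A - compLinA n d A) *m Y in
   blk n X 0 = invmx (Peval d A z) *m
     (- blk n Y d.-1 - A d *m blk n Y d.-1
      + \sum_(1 <= i < d.+1) A i *m (\sum_(0 <= j < i) z ^+ (i.-1 - j) *: blk n Y j))
   /\ (forall i : nat, (1 <= i < d)%N -> blk n X i = z *: blk n X i.-1 - blk n Y i.-1))
  /\
  (let Xt := invmx (ctmx (z *: compLinB n d A - compLinA n d A)) *m W in
   blk n Xt d.-1 = - (invmx (ctmx (Peval d A z)) *m
                      \sum_(0 <= j < d) (Num.conj z) ^+ j *: blk n W j)
   /\ ((2 <= d)%N -> blk n Xt d.-2 =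
         - blk n W d.-1 - Num.conj z *: (ctmx (A d) *m blk n Xt d.-1)
         - ctmx (A d.-1) *m blk n Xt d.-1)
   /\ (forall i : nat, (i + 3 <= d)%N -> blk n Xt i =
         - blk n W i.+1 + Num.conj z *: blk n Xt i.+1 - ctmx (A i.+1) *m blk n Xt d.-1)).
Proof.
case: d A hd hAd hP Y W => [//|d] A _ _ P_unit Y W.
have L_unit := pencil_unitmx P_unit.
split=> [X | Xt].
  have [X_rec P_X0] := pencil_mul_solve (mulKVmx L_unit Y).
  split=> [|[|i] //= lt_id]; last by rewrite X_rec.
  by rewrite -P_X0 mulKmx.
have XtW := mulKVmx (ctmx_unit L_unit) W.
split; [|split=> [d_gt0 | i lt_id]].
- rewrite -XtW big_mkord adj_pencil_mul_powers mulmxN opprK mulKmx //.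
  exact: ctmx_unit.
- by rewrite /= (adj_pencil_mul_back_subst XtW) prednK ?ltnn ?eqxx ?scale1r ?sub0r // ltn_predL.
- have lt_i1d : (i.+1 < d)%N by lia.
  rewrite (adj_pencil_mul_back_subst XtW) ?lt_i1d ?(ltn_eqF lt_i1d) 1?ltnW //.
  by rewrite scale0r subr0 [_ - blk n W _]addrC.
Qed.
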